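(* Let $s\ge 2$ and $0\le v\le s$ be integers. Consider all numbers $S(v,d,n)$ with $d,n$ nonnegative integers and $v+d+n=s$. Then $$\sum_{\substack{d,n\ge 0\\ d+n=s-v}} S(v,d,n)=\begin{cases}\binom{s-1}{2} & \text{if } v=0,\\[2pt] \binom{s-1}{v}+\binom{s-1}{v+2} & \text{if } v\ge 1.\end{cases}$$ Moreover, the number of pairs $(d,n)$ with $d+n=s-v$ for which $S(v,d,n)\neq 0$ is $s-2$ if $v=0$ and $s-v$ if $v\ge 1$.
   Context: Binomial convention: for integers $M,m$, $\binom{M}{m}=\frac{M!}{m!(M-m)!}$ if $0\le m\le M$, and $\binom{M}{m}=0$ otherwise (in particular whenever $M<0$ or $m<0$ or $m>M$). For nonnegative integers $v,d,n$ the hypersolid number is defined by $$S(v,d,n)=\binom{v+n-2}{v-1}+d\binom{v+n-2}{v}.$$ (So $S(0,d,n)=d$ for $n\ge2$ and $0$ for $n\in\{0,1\}$; $S(1,d,n)=1+d(n-1)$ for $n\ge1$ and $S(1,d,0)=0$; $S(v,d,0)=0$.) *)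

From mathcomp Require Import all_boot all_order all_algebra.
Set Implicit Arguments. Unset Strict Implicit. Unset Printing Implicit Defensive.
Import Order.TTheory GRing.Theory Num.Theory.

Definition binomZ (M m : int) : nat :=
  match M, m with
  | Posz M', Posz m' => 'C(M', m')
  | _, _ => 0%N
  end.

Definition hyper (v d n : nat) : nat :=
  (binomZ (v%:Z + n%:Z - 2) (v%:Z - 1) + d * binomZ (v%:Z + n%:Z - 2) v%:Z)%N.

From mathcomp Require Import all_boot all_order all_algebra.
Import GRing.Theory.

(* The hypersolid number S(v,d,n) is affine in d: S = A + d * B with A, B
   depending only on (v,n).  We first evaluate the integer-argument binomials to get closed forms: S(0,d,n) = d*[n > 1], and for v = w+1,
   A = C(w+n-1, w) and B = C(w+n-1, w+1) when n >= 1, both 0 when n = 0.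
   All sums are over the antidiagonal d + n = m; peeling off the term d = 0
   (lemma sum_antidiag_recl) turns each sum into a recursion in m, which
   Pascal's rule closes by induction: for v = 0 this gives C(m-1, 2), for
   v = w+1 it gives C(w+m, w+1) + C(w+m, w+3).  Non-vanishing of S is read
   off the closed forms (d > 0 and n > 1 for v = 0; n > 0 otherwise), and the
   counts are again antidiagonal sums of indicators.  The theorem follows by
   taking m = s - v. *)

Lemma binomZ_negr (M : int) (k : nat) : binomZ M (Negz k) = 0%N.
Proof. by case: M. Qed.

Lemma binomZ_negl (k : nat) (m : int) : binomZ (Negz k) m = 0%N.
Proof. by case: m. Qed.

Lemma Posz_addB2 (a b c : nat) : (a + b = c + 2)%N -> (a%:Z + b%:Z - 2 = c%:Z)%R.
Proof. by move=> abc; rewrite -PoszD abc PoszD addrK. Qed.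

Lemma hyper0 (d n : nat) : hyper 0 d n = (d * (1 < n))%N.
Proof.
rewrite /hyper.
have -> : (0%:Z - 1 = Negz 0)%R by [].
rewrite binomZ_negr add0n.
case: n => [|[|k]].
- by have -> : (0%:Z + 0%:Z - 2 = Negz 1)%R by []; rewrite binomZ_negl.
- by have -> : (0%:Z + 1%:Z - 2 = Negz 0)%R by []; rewrite binomZ_negl.
- by rewrite (@Posz_addB2 _ _ k) ?add0n ?addn2 //= bin0 muln1.
Qed.

Definition hyper_base (w n : nat) : nat :=
  if n is k.+1 then 'C(w + k, w) else 0%N.
Definition hyper_slope (w n : nat) : nat :=
  if n is k.+1 then 'C(w + k, w.+1) else 0%N.

Lemma hyperS (w d n : nat) :
  hyper w.+1 d n = (hyper_base w n + d * hyper_slope w n)%N.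
Proof.
rewrite /hyper.
have -> : (w.+1%:Z - 1 = w%:Z)%R by rewrite -addn1 PoszD addrK.
case: n => [|k].
- case: w => [|w].
  + by have -> : (1%:Z + 0%:Z - 2 = Negz 0)%R by [].
  + by rewrite (@Posz_addB2 _ _ w) ?addn0 ?addn2 //= bin_small // bin_small.
- by rewrite (@Posz_addB2 _ _ (w + k)) // addSn addnS addn2.
Qed.

Lemma sum_antidiag_recl (f : nat -> nat -> nat) (m : nat) :
  (\sum_(d < m.+2) f d (m.+1 - d) = f 0 m.+1 + \sum_(d < m.+1) f d.+1 (m - d))%N.
Proof.
(* the shifted summands agree up to conversion: m.+1 - d.+1 reduces to m - d *)
by rewrite big_ord_recl subn0.
Qed.

Lemma count_antidiag_n_gt0 (m : nat) : (\sum_(d < m.+1) (0 < m - d) = m)%N.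
Proof.
elim: m => [|m IH]; first by rewrite big_ord1.
by rewrite (sum_antidiag_recl (fun _ n => nat_of_bool (0 < n))) IH.
Qed.

Lemma count_antidiag_n_gt1 (m : nat) : (\sum_(d < m.+1) (1 < m - d) = m.-1)%N.
Proof.
elim: m => [|m IH]; first by rewrite big_ord1.
by rewrite (sum_antidiag_recl (fun _ n => nat_of_bool (1 < n))) IH; case: m {IH}.
Qed.

Lemma count_antidiag_d_gt0_n_gt1 (m : nat) :
  (\sum_(d < m.+1) ((0 < d) && (1 < m - d)) = m.-2)%N.
Proof.
case: m => [|m]; first by rewrite big_ord1.
rewrite (sum_antidiag_recl (fun d n => nat_of_bool ((0 < d) && (1 < n)))) /=.
by rewrite add0n count_antidiag_n_gt1.
Qed.

Lemma sum_hyper0 (m : nat) : (\sum_(d < m.+1) hyper 0 d (m - d) = 'C(m.-1, 2))%N.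
Proof.
elim: m => [|m IH]; first by rewrite big_ord1 hyper0.
rewrite (sum_antidiag_recl (hyper 0)) hyper0 mul0n add0n.
under eq_bigr => i _ do rewrite hyper0 mulSn.
rewrite big_split /= count_antidiag_n_gt1.
under [X in (_ + X)%N]eq_bigr => i _ do rewrite -hyper0.
rewrite IH addnC; case: m {IH} => [|m] //=.
by rewrite [in RHS]binS bin1.
Qed.

(* Hockey-stick identity for the slope: sum of B over the antidiagonal. *)
Lemma sum_hyper_slope (w m : nat) :
  (\sum_(d < m.+1) hyper_slope w (m - d) = 'C(w + m, w.+2))%N.
Proof.
elim: m => [|m IH]; first by rewrite big_ord1 /= addn0 bin_small.
by rewrite (sum_antidiag_recl (fun _ n => hyper_slope w n)) IH /= addnS binS addnC.
Qed.

Lemma sum_hyperS (w m : nat) :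
  (\sum_(d < m.+1) hyper w.+1 d (m - d) = 'C(w + m, w.+1) + 'C(w + m, w.+3))%N.
Proof.
elim: m => [|m IH].
  by rewrite big_ord1 hyperS /= addn0 !bin_small ?ltnS ?leqnSn // ltnW.
rewrite (sum_antidiag_recl (hyper w.+1)) hyperS mul0n addn0.
under eq_bigr => i _ do rewrite hyperS mulSn addnCA -hyperS.
rewrite big_split /= IH sum_hyper_slope /= addnS !binS.
rewrite [X in _ = X + _]addnC [X in _ = _ + X]addnC -addnA.
by congr (_ + _); exact: addnCA.
Qed.

(* Support of S: for v = 0 it is d > 0 and n > 1; for v > 0 it is n > 0,
   since then A(n) = C(w+n-1, w) >= 1. *)
Lemma hyper0_neq0 (d n : nat) : (hyper 0 d n != 0%N) = (0 < d) && (1 < n).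
Proof. by rewrite hyper0 muln_eq0 negb_or -lt0n; case: (1 < n). Qed.

Lemma hyperS_neq0 (w d n : nat) : (hyper w.+1 d n != 0%N) = (0 < n).
Proof.
rewrite hyperS; case: n => [|k] /=; first by rewrite muln0.
by rewrite -lt0n addn_gt0 bin_gt0 leq_addr.
Qed.

Lemma card_ord_set_sum (m : nat) (P : nat -> bool) :
  #|[set d : 'I_m | P d]| = (\sum_(d < m) P d)%N.
Proof.
rewrite -sum1_card big_mkcond /=; apply: eq_bigr => i _.
by rewrite inE; case: (P i).
Qed.

Theorem theorem1 (s v : nat) (hs : (2 <= s)%N) (hv : (v <= s)%N) :
  (\sum_(d < (s - v).+1) hyper v d (s - v - d)
     = if v == 0%N then 'C(s.-1, 2) else ('C(s.-1, v) + 'C(s.-1, v.+2))%N)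
  /\
  #|[set d : 'I_(s - v).+1 | hyper v d (s - v - d) != 0%N]|
     = (if v == 0%N then s - 2 else s - v)%N.
Proof.
rewrite (@card_ord_set_sum _ (fun d => hyper v d (s - v - d) != 0%N)).
case: v hv => [|w] hv /=.
  rewrite subn0 sum_hyper0; split=> //.
  under eq_bigr => i _ do rewrite hyper0_neq0.
  by rewrite count_antidiag_d_gt0_n_gt1 subn2.
have top_index : (w + (s - w.+1) = s.-1)%N.
  by case: s hs hv => // s _ hv; rewrite subSS /= subnKC.
split; first by rewrite sum_hyperS top_index.
under eq_bigr => i _ do rewrite hyperS_neq0.
by rewrite count_antidiag_n_gt0.
Qed.
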